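(* Let $(G,L)$ be a labelled edge-coloured digraph. Then, in $\mathrm{NCQSym}(\mathbf{x})$, $$\Delta(\mathscr{Y}_{(G,L)}(\mathbf{x}))=\sum_F\mathscr{Y}_{(G|_{V(G)-V(F)},\,L_{V(G)-V(F)})}(\mathbf{x})\otimes\mathscr{Y}_{(F,\,L_{V(F)})}(\mathbf{x}),$$ where the sum runs over all $\{\rightarrow,\Rightarrow\}$-induced subdigraphs $F$ of $G$.
   Context: An edge-coloured digraph is a finite simple digraph with each edge dashed ($\dashrightarrow$), solid ($\rightarrow$) or double ($\Rightarrow$); a proper vertex-colouring is $\kappa:V\to\mathbb{P}$ with $\kappa(a)\ne\kappa(b)$, $\kappa(a)<\kappa(b)$, $\kappa(a)\le\kappa(b)$ for dashed, solid, double edges $(a,b)$ respectively. A labelled edge-coloured digraph $(G,L)$ has a bijection $L:V(G)\to[|V(G)|]$, and $\mathscr{Y}_{(G,L)}(\mathbf{x})=\sum_\kappa\mathbf{x}_{\kappa(L^{-1}(1))}\cdots\mathbf{x}_{\kappa(L^{-1}(|V(G)|))}$ over proper vertex-colourings, in noncommuting variables (equal to $1$ for the empty digraph). For $A\subseteq V(G)$, $G|_A$ is the induced subdigraph on $A$ with edge types kept, and $L_A:A\to[|A|]$ is $L_A(a)=\mathrm{std}_B(L(a))$ where $B=L(A)$ and $\mathrm{std}_B:B\to[|B|]$ is the unique order-preserving bijection. An induced subdigraph $F$ is $\{\rightarrow,\Rightarrow\}$-induced if $a\in V(F)$ and $a\rightarrow b$ or $a\Rightarrow b$ in $G$ imply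 $b\in V(F)$. $\mathrm{NCQSym}(\mathbf{x})$ is the space of bounded-degree series $f$ in noncommuting $\mathbf{x}$ such that for each set composition $\Phi=(\Phi_1|\cdots|\Phi_k)$ of $[n]$ all monomials $\mathbf{x}_{i_1}\cdots\mathbf{x}_{i_n}$ with $i_j=i_\ell$ for $j,\ell$ in a common block and $i_j<i_\ell$ for $j\in\Phi_p,\ell\in\Phi_q$, $p<q$, have equal coefficients; its coproduct evaluates $f$ on $\mathbf{x}_1<\mathbf{x}_2<\cdots<\mathbf{y}_1<\mathbf{y}_2<\cdots$, imposes $\mathbf{x}_i\mathbf{y}_j=\mathbf{y}_j\mathbf{x}_i$, reads the result as $\sum f_1(\mathbf{x})\otimes f_2(\mathbf{y})$ and replaces $\mathbf{y}$ by $\mathbf{x}$. *)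

From mathcomp Require Import all_boot.
Set Implicit Arguments. Unset Strict Implicit. Unset Printing Implicit Defensive.

(* Conventions:
   - a monomial x_{i_1} ... x_{i_n} in noncommuting variables is a word
     [:: i_1 - 1; ...; i_n - 1] : seq nat (letter k stands for x_{k+1});
   - a series is its coefficient function  seq nat -> nat;
   - labels in [n] are 0-indexed: L : V -> 'I_n, label j stands for j+1. *)

Inductive etype := Dashed | Solid | Double.

Definition series := seq nat -> nat.

Definition proper (V : finType) (E : V -> V -> option etype) (k : V -> nat) :=
  [forall a, forall b,
     match E a b with
     | Some Dashed => k a != k b
     | Some Solid => k a < k b
     | Some Double => k a <= k b
     | None => true
     end].

(* Y_{(G,L)}: the coefficient of the word w is the number of proper
   colourings k with k (L^-1 j) = w_j for all j; for bijective L there is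
   exactly one candidate colouring, namely k = w o L. *)
Definition Yser (V : finType) (E : V -> V -> option etype) (L : V -> nat)
  : series :=
  fun w => ((size w == #|V|) && proper E (fun v => nth 0 w (L v)) : nat).

Definition subT (V : finType) (A : {set V}) := {v : V | v \in A}.

Definition induced_edges (V : finType) (E : V -> V -> option etype)
  (A : {set V}) : subT A -> subT A -> option etype :=
  fun x y => E (val x) (val y).

Definition std_lab (V : finType) (L : V -> nat) (A : {set V}) : subT A -> nat :=
  fun x => #|[set b in A | L b < L (val x)]|.

Arguments induced_edges {V} E A.
Arguments std_lab {V} L A.

Definition Ysub (V : finType) (E : V -> V -> option etype) (L : V -> nat)
  (A : {set V}) : series :=
  Yser (induced_edges E A) (std_lab L A).

Definition arrow_closed (V : finType) (E : V -> V -> option etype)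
  (A : {set V}) : bool :=
  [forall a, forall b,
     (a \in A) && (match E a b with
                     | Some Solid | Some Double => true
                     | _ => false end) ==> (b \in A)].

(* NCQSym: bounded degree and equal coefficients on words with the same
   set-composition pattern *)
Definition same_pattern (w1 w2 : seq nat) : bool :=
  (size w1 == size w2) &&
  [forall j : 'I_(size w1), forall l : 'I_(size w1),
     ((nth 0 w1 j == nth 0 w1 l) == (nth 0 w2 j == nth 0 w2 l)) &&
     ((nth 0 w1 j < nth 0 w1 l) == (nth 0 w2 j < nth 0 w2 l))].

Definition isNCQSym (f : series) : Prop :=
  (exists d, forall w, d < size w -> f w = 0) /\
  (forall w1 w2, same_pattern w1 w2 -> f w1 = f w2).

(* The word over x_1 < x_2 < ... < y_1 < y_2 < ... obtained by interleaving
   u (x-letters, at positions S) and v (y-letters); the y-letters are sent to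
   M + letter with M above every letter of u, so the order x < y is kept
   (for f in NCQSym, the coefficient of f(X+Y) only depends on this order). *)
Definition shuffle_word (u v : seq nat) (S : {set 'I_(size u + size v)})
  : seq nat :=
  let M := (\max_(i <- u) i).+1 in
  [seq (if k \in S then nth 0 u #|[set j in S | j < k]|
        else M + nth 0 v #|[set j | (j \notin S) && (j < k)]|)
  | k <- enum 'I_(size u + size v)].

Arguments shuffle_word : clear implicits.

(* coefficient of u(x) (x) v(x) in Delta f *)
Definition coprod (f : series) (u v : seq nat) : nat :=
  \sum_(S : {set 'I_(size u + size v)} | #|S| == size u) f (shuffle_word u v S).

From Pilot Require Import Defs.
From mathcomp Require Import all_boot.
Set Implicit Arguments. Unset Strict Implicit. Unset Printing Implicit Defensive.

(* Read the coefficient of u(x) (x) v(y) in Y(x + y) through a colouring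
   with x_1 < x_2 < ... < y_1 < y_2 < ...: it splits V into the set A of
   y-coloured vertices and its complement.  As every y-colour exceeds every
   x-colour, the colouring is proper iff no solid or double edge leaves A
   (A is {->, =>}-closed) and its restrictions to V - A and to A are proper;
   standardising the labels on each part identifies these restrictions with
   the words u and v.  Membership in NCQSym holds because properness only
   depends on the relative order of the colours. *)

Definition edge_ok (e : option etype) (x y : nat) : bool :=
  match e with
  | Some Dashed => x != y
  | Some Solid => x < y
  | Some Double => x <= y
  | None => true
  end.

Definition arrow_edge (e : option etype) : bool :=
  if e is Some (Solid | Double) then true else false.

Lemma properE (V : finType) (E : V -> V -> option etype) (k : V -> nat) :
  Defs.proper E k = [forall a, forall b, edge_ok (E a b) (k a) (k b)].
Proof. by []. Qed.

Lemma arrow_closedP (V : finType) (E : V -> V -> option etype) (A : {set V}) :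
  reflect (forall a b, a \in A -> arrow_edge (E a b) -> b \in A)
          (arrow_closed E A).
Proof.
apply: (iffP forallP) => [cl a b aA|cl a]; last first.
  by apply/forallP => b; apply/implyP => /andP[aA]; apply: cl.
by have /forallP/(_ b)/implyP := cl a; rewrite aA.
Qed.

Lemma edge_ok_addl m e x y : edge_ok e (m + x) (m + y) = edge_ok e x y.
Proof. by case: e => [[]|] /=; rewrite ?eqn_add2l ?ltn_add2l ?leq_add2l. Qed.

Lemma edge_ok_lt e x y : x < y -> edge_ok e x y.
Proof.
case: e => [[]|] //= xy; [by rewrite neq_ltn xy | exact: ltnW].
Qed.

Lemma edge_ok_gt e x y : y < x -> edge_ok e x y = ~~ arrow_edge e.
Proof.
case: e => [[]|] //= yx; first by rewrite neq_ltn yx orbT.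
  by rewrite ltnNge ltnW.
by rewrite leqNgt yx.
Qed.

Lemma edge_ok_order e x y x' y' :
  (x == y) = (x' == y') -> (x < y) = (x' < y') -> (y < x) = (y' < x') ->
  edge_ok e x y = edge_ok e x' y'.
Proof.
move=> eq lt gt; case: e => [[]|] //=; rewrite ?eq ?lt //.
by rewrite [x <= y]leqNgt [x' <= y']leqNgt gt.
Qed.

Lemma same_pattern_nth w1 w2 i j :
  same_pattern w1 w2 -> i < size w1 -> j < size w1 ->
  ((nth 0 w1 i == nth 0 w1 j) = (nth 0 w2 i == nth 0 w2 j)) *
  ((nth 0 w1 i < nth 0 w1 j) = (nth 0 w2 i < nth 0 w2 j)).
Proof.
case/andP=> _ /forallP pat lti ltj.
by have /forallP/(_ (Ordinal ltj))/andP[/eqP-> /eqP->] := pat (Ordinal lti).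
Qed.

Lemma Yser_eq0 (V : finType) (E : V -> V -> option etype) (L : V -> nat) w :
  size w != #|V| -> Yser E L w = 0.
Proof. by rewrite /Yser => /negbTE->. Qed.

Lemma Ysub_eq0 (V : finType) (E : V -> V -> option etype) (L : V -> nat)
    (A : {set V}) w :
  size w != #|A| -> Ysub E L A w = 0.
Proof. by move=> szw; apply: Yser_eq0; rewrite card_sig. Qed.

Lemma Yser_isNCQSym (V : finType) (E : V -> V -> option etype) (L : V -> nat) :
  (forall v, L v < #|V|) -> isNCQSym (Yser E L).
Proof.
move=> ltL; split=> [|w1 w2 pat].
  by exists #|V| => w ltw; rewrite Yser_eq0 // neq_ltn ltw orbT.
have /andP[/eqP sz12 _] := pat; rewrite /Yser -sz12.
have [sz1|] := eqVneq (size w1) #|V|; last by [].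
congr (nat_of_bool (_ && _)); apply: eq_forallb => a; apply: eq_forallb => b.
have ltLa : L a < size w1 by rewrite sz1.
have ltLb : L b < size w1 by rewrite sz1.
apply: edge_ok_order; rewrite ?(same_pattern_nth pat ltLa ltLb) //.
by rewrite (same_pattern_nth pat ltLb ltLa).
Qed.

Lemma proper_split_above (V : finType) (E : V -> V -> option etype)
    (A : {set V}) (k ku kv : V -> nat) m :
  (forall x, ku x < m) ->
  (forall x, x \in A -> k x = m + kv x) -> (forall x, x \notin A -> k x = ku x) ->
  Defs.proper E k = [&& arrow_closed E A,
     Defs.proper (induced_edges E (~: A)) (fun y => ku (val y)) &
     Defs.proper (induced_edges E A) (fun y => kv (val y))].
Proof.
move=> ltm kA kC; have ku_lt_mkv a b : ku a < m + kv b by apply: ltn_addr.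
rewrite !properE; apply/idP/and3P => [pk|[/arrow_closedP cl pC pA]].
  have pk' a b := forallP (forallP pk a) b.
  split; apply/forallP => x; apply/forallP => y.
  - apply/implyP => /andP[xA arr]; apply/negPn/negP => yA.
    by move: (pk' x y); rewrite kA // kC // edge_ok_gt // [arrow_edge _]arr.
  - have [xA yA] : val x \notin A /\ val y \notin A.
      by split; rewrite -in_setC; apply: valP.
    by move: (pk' (val x) (val y)); rewrite kC // kC.
  - move: (pk' (val x) (val y)).
    by rewrite (kA _ (valP x)) (kA _ (valP y)) edge_ok_addl.
apply/forallP => a; apply/forallP => b.
have [aA|aA] := boolP (a \in A); have [bA|bA] := boolP (b \in A).
- by move: (forallP (forallP pA (exist _ a aA)) (exist _ b bA)) => /=;
    rewrite !kA // edge_ok_addl.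
- by rewrite kA // kC // edge_ok_gt //; apply: contra bA; apply: cl.
- by rewrite kC // kA // edge_ok_lt.
- have [aC bC] : a \in ~: A /\ b \in ~: A by rewrite !in_setC.
  by move: (forallP (forallP pC (exist _ a aC)) (exist _ b bC)) => /=;
    rewrite !kC.
Qed.

Definition lab_rank (V : finType) (L : V -> nat) (A : {set V}) (x : V) : nat :=
  #|[set b in A | L b < L x]|.

Lemma nth_lt_max_seq (u : seq nat) i : nth 0 u i < (\max_(j <- u) j).+1.
Proof.
rewrite ltnS; have [lti|?] := ltnP i (size u); last by rewrite nth_default.
by apply: (@leq_bigmax_seq _ u xpredT id); rewrite ?mem_nth.
Qed.

Section Shuffle.

Variables u v : seq nat.
Local Notation n := (size u + size v).
Local Notation m := (\max_(i <- u) i).+1.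

Lemma size_shuffle_word (S : {set 'I_n}) : size (shuffle_word u v S) = n.
Proof. by rewrite size_map size_enum_ord. Qed.

Lemma nth_shuffle_word (S : {set 'I_n}) (k : 'I_n) :
  nth 0 (shuffle_word u v S) k =
  if k \in S then nth 0 u #|[set j in S | j < k]|
  else m + nth 0 v #|[set j | (j \notin S) && (j < k)]|.
Proof. by rewrite (nth_map k) ?size_enum_ord ?ltn_ord // nth_ord_enum. Qed.

Variables (V : finType) (E : V -> V -> option etype).
Variables (L : V -> 'I_n) (g : 'I_n -> V).
Hypotheses (Lg : cancel L g) (gL : cancel g L).
Local Notation LL := (fun x => nat_of_ord (L x)).

Lemma card_preim_inv (B : {set V}) : #|g @^-1: B| = #|B|.
Proof. exact/on_card_preimset/onW_bij/(Bijective gL Lg). Qed.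

Lemma card_preim_inv_lt (B : {set V}) x :
  #|[set j in g @^-1: B | j < L x]| = lab_rank LL B x.
Proof.
rewrite /lab_rank -card_preim_inv; apply: eq_card => j.
by rewrite !inE gL.
Qed.

Lemma nth_shuffle_word_lab (A : {set V}) x :
  nth 0 (shuffle_word u v (g @^-1: ~: A)) (L x) =
  if x \in A then m + nth 0 v (lab_rank LL A x)
  else nth 0 u (lab_rank LL (~: A) x).
Proof.
rewrite nth_shuffle_word -!card_preim_inv_lt !inE Lg.
have [xA|//] := boolP (x \in A).
by congr (m + nth 0 v _); apply: eq_card => j; rewrite !inE negbK.
Qed.

Lemma Yser_shuffle_word (A : {set V}) :
  #|V| = n -> #|~: A| = size u ->
  Yser E LL (shuffle_word u v (g @^-1: ~: A)) =
  arrow_closed E A * (Ysub E LL (~: A) u * Ysub E LL A v).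
Proof.
move=> cardV cardAC.
have cardA : #|A| = size v.
  by apply/eqP; rewrite -(eqn_add2l #|~: A|) addnC cardsC cardAC cardV.
have cardAC' : #|[pred x in ~: A]| = size u by rewrite -cardAC; apply: eq_card.
have cardA' : #|[pred x in A]| = size v by rewrite -cardA; apply: eq_card.
rewrite /Ysub /Yser !card_sig cardA' cardAC' size_shuffle_word cardV !eqxx /=.
rewrite (@proper_split_above _ E A _ (fun x => nth 0 u (lab_rank LL (~: A) x))
  (fun x => nth 0 v (lab_rank LL A x)) m) => [||x xA|x xA]; last first.
- by rewrite nth_shuffle_word_lab (negbTE xA).
- by rewrite nth_shuffle_word_lab xA.
- by move=> x; apply: nth_lt_max_seq.
by case: (arrow_closed _ _); case: (Defs.proper _ _); case: (Defs.proper _ _).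
Qed.

Lemma coprod_Yser_bij : #|V| = n ->
  coprod (Yser E LL) u v =
  \sum_(A : {set V} | arrow_closed E A) Ysub E LL (~: A) u * Ysub E LL A v.
Proof.
(* The x-positions of the shuffled word are the labels of the vertices outside A. *)
move=> cardV; rewrite /coprod (reindex (fun A => g @^-1: ~: A)); last first.
  exists (fun S : {set 'I_n} => ~: (L @^-1: S)) => [A _|S _]; apply/setP => y.
    by rewrite !inE Lg negbK.
  by rewrite !inE gL negbK.
rewrite big_mkcond [RHS]big_mkcond; apply: eq_bigr => A _.
rewrite card_preim_inv; have [cardAC|szu] := eqVneq #|~: A| (size u).
  by rewrite Yser_shuffle_word //; case: (arrow_closed E A); rewrite ?mul1n.
by rewrite Ysub_eq0 1?eq_sym //; case: (arrow_closed E A).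
Qed.

End Shuffle.

Lemma coprod_Yser_size_neq (V : finType) (E : V -> V -> option etype)
    (L : V -> nat) u v :
  #|V| != size u + size v ->
  coprod (Yser E L) u v =
  \sum_(A : {set V} | arrow_closed E A) Ysub E L (~: A) u * Ysub E L A v.
Proof.
move=> cardV; rewrite /coprod big1 => [|S _]; last first.
  by rewrite Yser_eq0 // size_shuffle_word eq_sym.
apply/esym/big1 => A _.
have [szu|] := eqVneq (size u) #|~: A|; last by move/Ysub_eq0->.
have [szv|] := eqVneq (size v) #|A|; last by move/Ysub_eq0->; rewrite muln0.
by move: cardV; rewrite szu szv addnC cardsC eqxx.
Qed.

Theorem mainTheorem10 (V : finType) (E : V -> V -> option etype)
  (L : V -> 'I_#|V|)
  (noloop : forall v, E v v = None) (Lbij : bijective L) :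
  let LL := fun v => nat_of_ord (L v) in
  isNCQSym (Yser E LL) /\
  forall u v : seq nat,
    coprod (Yser E LL) u v =
    \sum_(A : {set V} | arrow_closed E A)
       Ysub E LL (~: A) u * Ysub E LL A v.
Proof.
move=> LL; split=> [|u v]; first by apply: Yser_isNCQSym => x; apply: ltn_ord.
have [cardV|] := eqVneq #|V| (size u + size v); last first.
  exact: coprod_Yser_size_neq.
case: Lbij => g Lg gL.
apply: (@coprod_Yser_bij u v V E (cast_ord cardV \o L)
                         (g \o cast_ord (esym cardV))) => //.
- by move=> x; rewrite /= cast_ordK Lg.
- by move=> j; rewrite /= gL cast_ordKV.
Qed.
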